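(* Let $P$ be a treetope with base $B$. Then for every face $F$ of $P$ with $\dim F>1$, either $F\subseteq B$, or $F\cap B$ is a facet of $F$ and $F$ is a treetope with base $F\cap B$. In particular, $\dim(F\cap B)\ge \dim F-1$ for every face $F$ of $P$ with $\dim F>1$.
   Context: A polytope is the convex hull of a finite set of points in a Euclidean space; faces, vertices, edges, facets and the graph (1-skeleton) are as usual. A \emph{treetope} is a polytope $P$ together with a distinguished facet $B$ (the \emph{base}) such that every face $F$ of $P$ whose intersection $F\cap B$ consists of at most one point has dimension at most one. *)

From HB Require Import structures.
From mathcomp Require Import all_boot all_order all_algebra.
Set Implicit Arguments. Unset Strict Implicit. Unset Printing Implicit Defensive.
Import Order.TTheory GRing.Theory Num.Theory.
Local Open Scope ring_scope.

Section Polytopes.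
Variables (R : realFieldType) (n : nat).
Notation pt := 'rV[R]_n.
Definition pset := pt -> Prop.

Definition dotv (u v : pt) : R := \sum_(i < n) u ord0 i * v ord0 i.

Definition conv (V : seq pt) : pset := fun x =>
  exists w : 'I_(size V) -> R,
    (forall i, 0 <= w i) /\ \sum_(i < size V) w i = 1 /\
    x = \sum_(i < size V) w i *: V`_i.

Definition is_polytope (P : pset) : Prop :=
  exists V : seq pt, forall x, P x <-> conv V x.

Definition psubset (A B : pset) : Prop := forall x, A x -> B x.
Definition psetI (A B : pset) : pset := fun x => A x /\ B x.

(* faces: intersections of P with a (weakly) valid inequality; this includes
   the empty face and P itself (a = 0). *)
Definition face (P F : pset) : Prop :=
  exists (a : pt) (b : R),
    (forall x, P x -> dotv a x <= b) /\
    (forall x, F x <-> (P x /\ dotv a x = b)).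

Definition aff_indep (ps : seq pt) : Prop :=
  forall c : 'I_(size ps) -> R,
    \sum_(i < size ps) c i = 0 ->
    \sum_(i < size ps) c i *: ps`_i = 0 ->
    forall i, c i = 0.

(* dim_is S d : the affine dimension of S is d (d = -1 iff S is empty),
   i.e. d+1 is the maximal number of affinely independent points of S. *)
Definition dim_is (S : pset) (d : int) : Prop :=
  exists m : nat, d = (m%:Z - 1)%R /\
    (exists ps : seq pt, size ps = m /\ (forall x, x \in ps -> S x) /\ aff_indep ps) /\
    (forall ps : seq pt, (forall x, x \in ps -> S x) -> aff_indep ps -> (size ps <= m)%N).

Definition facet (P F : pset) : Prop :=
  face P F /\ exists d : int, dim_is P d /\ dim_is F (d - 1).

Definition treetope (P B : pset) : Prop :=
  is_polytope P /\ facet P B /\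
  forall F, face P F ->
    (forall x y, F x -> B x -> F y -> B y -> x = y) ->
    forall d : int, dim_is F d -> d <= 1.

End Polytopes.

(* Faces of a polytope are convex hulls of sublists of its vertices, and the affine
   dimension of the hull of a list L is the rank of the matrix of the homogenized points
   (1, v), v in L, minus one.  So for a face F with vertex list W the codimension of
   F ∩ B in F is the dimension of the space of affine functions vanishing on the
   vertices of F ∩ B, restricted to W.  The slack s of the base inequality is such a
   function, nonzero on W unless F is contained in B: the codimension is at least one.
   If it were at least two, there would be a second such function p, not proportional
   to s on W.  Let g be a vertex of F ∩ B of maximal norm, exposed by an affine c, and
   take a lower edge of the planar points (p v / s v, c v / s v), v a vertex of F off B.
   The corresponding combination of s, p and c cuts out a face of F meeting B only in g
   but containing three affinely independent vertices; a treetope has no such face. *)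

From HB Require Import structures.
From mathcomp Require Import all_boot all_order all_algebra.
From mathcomp Require Import ring lra zify.
From Stdlib Require Import Classical.
Import Order.TTheory GRing.Theory Num.Theory.
Local Open Scope ring_scope.
Set Implicit Arguments. Unset Strict Implicit. Unset Printing Implicit Defensive.

Section Affine.
Variables (R : realFieldType) (n : nat).
Notation pt := 'rV[R]_n.

Lemma dotv_sumr m (w : 'I_m -> R) (v : 'I_m -> pt) (a : pt) :
  dotv a (\sum_(i < m) w i *: v i) = \sum_(i < m) w i * dotv a (v i).
Proof.
rewrite /dotv; under eq_bigr do rewrite summxE.
under [RHS]eq_bigr do rewrite mulr_sumr.
rewrite exchange_big /=; apply: eq_bigr => j _; rewrite mulr_sumr.
by apply: eq_bigr => i _; rewrite mxE mulrCA.
Qed.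

Lemma dotvC (a x : pt) : dotv a x = dotv x a.
Proof. by apply: eq_bigr => i _; rewrite mulrC. Qed.

Lemma dotvDl (a b x : pt) : dotv (a + b) x = dotv a x + dotv b x.
Proof. by rewrite /dotv -big_split; apply: eq_bigr => i _; rewrite mxE mulrDl. Qed.

Lemma dotvNl (a x : pt) : dotv (- a) x = - dotv a x.
Proof. by rewrite /dotv -sumrN; apply: eq_bigr => i _; rewrite mxE mulNr. Qed.

Lemma dotvBl (a b x : pt) : dotv (a - b) x = dotv a x - dotv b x.
Proof. by rewrite dotvDl dotvNl. Qed.

Lemma dotvBr (a x y : pt) : dotv a (x - y) = dotv a x - dotv a y.
Proof. by rewrite !(dotvC a) dotvBl. Qed.

Lemma dotvv_gt0 (x : pt) : x != 0 -> 0 < dotv x x.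
Proof.
move=> x_neq0; have sq_ge0 i : predT i -> 0 <= x 0 i * x 0 i.
  by rewrite -expr2 sqr_ge0.
rewrite lt_def sumr_ge0 // andbT; apply: contraNneq x_neq0.
move=> /(psumr_eq0P sq_ge0) xx0; apply/eqP/rowP => i; rewrite mxE.
by apply/eqP; rewrite -[_ == 0]orbb -mulf_eq0 xx0.
Qed.

Lemma dotv_lt_sqnorm (g w : pt) : dotv w w <= dotv g g -> w != g -> dotv g w < dotv g g.
Proof.
move=> wg; rewrite -subr_eq0 => /dotvv_gt0.
by rewrite dotvBr !dotvBl (dotvC w g); lra.
Qed.

Definition homog (x : pt) : 'rV[R]_(1 + n) := row_mx (const_mx 1) x.

Definition aff (z : 'rV[R]_(1 + n)) (x : pt) : R := \sum_j z 0 j * homog x 0 j.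

Lemma aff_row_mx (c : 'rV[R]_1) (a x : pt) : aff (row_mx c a) x = c 0 0 + dotv a x.
Proof.
rewrite /aff big_split_ord /= big_ord1; congr (_ + _).
  by rewrite /homog !row_mxEl mxE mulr1; congr (c _ _); apply: val_inj.
by apply: eq_bigr => j _; rewrite /homog !row_mxEr.
Qed.

Lemma affDl (z1 z2 : 'rV[R]_(1 + n)) x : aff (z1 + z2) x = aff z1 x + aff z2 x.
Proof. by rewrite /aff -big_split; apply: eq_bigr => j _; rewrite mxE mulrDl. Qed.

Lemma affZl k (z : 'rV[R]_(1 + n)) x : aff (k *: z) x = k * aff z x.
Proof. by rewrite /aff mulr_sumr; apply: eq_bigr => j _; rewrite mxE mulrA. Qed.

Definition tight (z : 'rV[R]_(1 + n)) : pred pt := fun v => aff z v == 0.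

Lemma sum_scale_homog m (w : 'I_m -> R) (v : 'I_m -> pt) :
  \sum_(i < m) w i *: homog (v i) =
  row_mx (const_mx (\sum_(i < m) w i)) (\sum_(i < m) w i *: v i).
Proof.
apply/rowP => j; rewrite summxE -[j]splitK; case: (split j) => k /=.
  by rewrite row_mxEl mxE; apply: eq_bigr => i _; rewrite mxE /homog row_mxEl mxE mulr1.
by rewrite row_mxEr summxE; apply: eq_bigr => i _; rewrite mxE /homog row_mxEr mxE.
Qed.

Lemma sum_aff m (w : 'I_m -> R) (v : 'I_m -> pt) (c : 'rV[R]_1) (a : pt) :
  \sum_(i < m) w i * aff (row_mx c a) (v i) =
  (\sum_(i < m) w i) * c 0 0 + dotv a (\sum_(i < m) w i *: v i).
Proof.
rewrite dotv_sumr mulr_suml -big_split; apply: eq_bigr => i _.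
by rewrite aff_row_mx mulrDr.
Qed.

Lemma aff_comb m (w : 'I_m -> R) (v : 'I_m -> pt) z : \sum_(i < m) w i = 1 ->
  aff z (\sum_(i < m) w i *: v i) = \sum_(i < m) w i * aff z (v i).
Proof. by rewrite -[z]hsubmxK sum_aff aff_row_mx => ->; rewrite mul1r. Qed.

Lemma aff_comb0 m (c : 'I_m -> R) (v : 'I_m -> pt) z :
  \sum_(i < m) c i = 0 -> \sum_(i < m) c i *: v i = 0 ->
  \sum_(i < m) c i * aff z (v i) = 0.
Proof.
rewrite -[z]hsubmxK sum_aff => -> ->.
by rewrite mul0r add0r /dotv big1 // => i _; rewrite !mxE mulr0.
Qed.

Lemma faceP (P F : pset R n) : face P F <->
  exists z, (forall x, P x -> 0 <= aff z x) /\ (forall x, F x <-> P x /\ aff z x = 0).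
Proof.
have affE (a : pt) b x : aff (row_mx (const_mx b) (- a)) x = b - dotv a x.
  by rewrite aff_row_mx mxE dotvNl.
split=> [[a [b [Pab Fab]]] | [z [Pz Fz]]].
  exists (row_mx (const_mx b) (- a)); split=> [x Px|x]; rewrite affE.
    by rewrite subr_ge0 Pab.
  rewrite Fab; split=> -[Px e]; split=> //; first by rewrite e subrr.
  by apply/eqP; rewrite eq_sym -subr_eq0 e.
exists (- rsubmx z), (lsubmx z 0 0).
have zE x : aff z x = lsubmx z 0 0 - dotv (- rsubmx z) x.
  by rewrite -{1}[z]hsubmxK aff_row_mx dotvNl opprK.
split=> [x Px|x]; first by rewrite -subr_ge0 -zE Pz.
rewrite Fz zE; split=> -[Px e]; split=> //; last by rewrite e subrr.
by apply/eqP; rewrite eq_sym -subr_eq0 e.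
Qed.

Lemma face_subset (Q G : pset R n) : face Q G -> psubset G Q.
Proof. by case=> a [b [_ G_ab]] x /G_ab []. Qed.

End Affine.

Lemma sum_scale_cons (R : pzRingType) (M : lmodType R) (T : zmodType) (f : T -> M)
    (w : nat -> R) (a : T) (s : seq T) :
  \sum_(i < size (a :: s)) w i *: f (a :: s)`_i =
  w 0%N *: f a + \sum_(i < size s) w i.+1 *: f s`_i.
Proof. by rewrite big_ord_recl; congr (_ + _); apply: eq_bigr => i _; rewrite lift0. Qed.

Lemma cone_filter (R : realFieldType) (M : lmodType R) (T : zmodType) (f : T -> M)
    (p : pred T) (s : seq T) (y : M) :
  (exists w : nat -> R, (forall i, 0 <= w i) /\
     \sum_(i < size (filter p s)) w i *: f (filter p s)`_i = y) <->
  (exists w : nat -> R, [/\ forall i, 0 <= w i,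
     forall i, (i < size s)%N -> ~~ p s`_i -> w i = 0 &
     \sum_(i < size s) w i *: f s`_i = y]).
Proof.
pose cons_w (w0 : R) (w : nat -> R) i := if i is j.+1 then w j else w0.
have cons_w_ge0 w0 w : 0 <= w0 -> (forall i, 0 <= w i) -> forall i, 0 <= cons_w w0 w i.
  by move=> ? ? [].
elim: s y => [|a s IH] y /=.
  by split=> -[w [w_ge0 wy]]; [exists w | exists w].
case pa: (p a) => /=; split.
- move=> [w [w_ge0]]; rewrite sum_scale_cons => wy.
  have [|w' [w'_ge0 w'_p w'y]] := proj1 (IH (y - w 0%N *: f a)).
    by exists (fun i => w i.+1); rewrite -wy addrAC subrr add0r.
  exists (cons_w (w 0%N) w'); split; first exact: cons_w_ge0.
    by case=> [|i] /=; [rewrite pa | exact: w'_p].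
  by rewrite sum_scale_cons w'y addrC subrK.
- move=> [w [w_ge0 w_p]]; rewrite sum_scale_cons => wy.
  have [|w' [w'_ge0 w'y]] := proj2 (IH (y - w 0%N *: f a)).
    exists (fun i => w i.+1); split=> [//|i|]; first exact: (w_p i.+1).
    by rewrite -wy addrAC subrr add0r.
  exists (cons_w (w 0%N) w'); split; first exact: cons_w_ge0.
  by rewrite sum_scale_cons w'y addrC subrK.
- move=> [w [w_ge0 wy]].
  have [|w' [w'_ge0 w'_p w'y]] := proj1 (IH y); first by exists w.
  exists (cons_w 0 w'); split; first exact: cons_w_ge0.
    by case=> [|i] /=; [rewrite pa | exact: w'_p].
  by rewrite sum_scale_cons scale0r add0r.
- move=> [w [w_ge0 w_p]]; rewrite sum_scale_cons => wy.
  have w0 : w 0%N = 0 by apply: w_p => //=; rewrite pa.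
  apply/IH; exists (fun i => w i.+1); split=> [//|i|]; first exact: (w_p i.+1).
  by rewrite -wy w0 scale0r add0r.
Qed.

Section Hull.
Variables (R : realFieldType) (n : nat).
Notation pt := 'rV[R]_n.

(* [conv] with weights indexed by [nat], which survive changes of the list. *)
Definition hull (V : seq pt) : pset R n := fun x =>
  exists w : nat -> R, [/\ forall i, 0 <= w i, \sum_(i < size V) w i = 1 &
    x = \sum_(i < size V) w i *: V`_i].

Lemma conv_hull V x : conv V x <-> hull V x.
Proof.
split=> [[w [w_ge0 [w1 ->]]] | [w [w_ge0 w1 ->]]]; last by exists (fun i => w i).
pose wn k := \sum_(i < size V | val i == k) w i.
have wnE (i : 'I_(size V)) : wn i = w i.
  by rewrite /wn (big_pred1 i) // => j; rewrite /= val_eqE.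
exists wn; split; first by move=> k; rewrite sumr_ge0.
  by rewrite -w1; apply: eq_bigr => i _; rewrite wnE.
by apply: eq_bigr => i _; rewrite wnE.
Qed.

Lemma hull_mem V v : v \in V -> hull V v.
Proof.
move=> vV; have iV : (index v V < size V)%N by rewrite index_mem.
exists (fun k => (k == index v V)%:R); split=> [i||]; first by rewrite ler0n.
  rewrite (bigD1 (Ordinal iV)) //= eqxx big1 ?addr0 // => i /negbTE.
  by rewrite -val_eqE /= => ->.
rewrite (bigD1 (Ordinal iV)) //= eqxx scale1r nth_index // big1 ?addr0 // => i.
by move=> /negbTE; rewrite -val_eqE /= => ->; rewrite scale0r.
Qed.

Lemma hull_nil x : ~ hull [::] x.
Proof. by case=> w [_ /esym/eqP]; rewrite big_ord0 oner_eq0. Qed.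

Lemma hull_homog V x : hull V x <->
  exists w : nat -> R, (forall i, 0 <= w i) /\ \sum_(i < size V) w i *: homog V`_i = homog x.
Proof.
split=> [[w [w_ge0 w1 ->]] | [w [w_ge0]]].
  by exists w; rewrite sum_scale_homog w1.
rewrite sum_scale_homog => /eq_row_mx [w1 <-]; exists w; split=> //.
by have := congr1 (fun c : 'rV_1 => c 0 0) w1; rewrite /= !mxE.
Qed.

Lemma hull_filter (p : pred pt) V x : hull (filter p V) x <->
  exists w : nat -> R, [/\ forall i, 0 <= w i,
    forall i, (i < size V)%N -> ~~ p V`_i -> w i = 0,
    \sum_(i < size V) w i = 1 & x = \sum_(i < size V) w i *: V`_i].
Proof.
rewrite hull_homog cone_filter.
split=> [[w [w_ge0 w_p]] | [w [w_ge0 w_p w1 ->]]].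
  rewrite sum_scale_homog => /eq_row_mx [w1 <-]; exists w; split=> //.
  by have := congr1 (fun c : 'rV_1 => c 0 0) w1; rewrite /= !mxE.
by exists w; rewrite sum_scale_homog w1.
Qed.

Lemma hull_aff_ge0 V z x :
  {in V, forall v, 0 <= aff z v} -> hull V x -> 0 <= aff z x.
Proof.
move=> V_ge0 [w [w_ge0 w1 ->]]; rewrite (aff_comb _ _ w1) sumr_ge0 // => i _.
by rewrite mulr_ge0 ?V_ge0 ?mem_nth.
Qed.

Lemma hull_aff_eq0 V z x : {in V, forall v, aff z v = 0} -> hull V x -> aff z x = 0.
Proof.
move=> V0 [w [_ w1 ->]]; rewrite (aff_comb _ _ w1) big1 // => i _.
by rewrite V0 ?mulr0 ?mem_nth.
Qed.

Lemma hull_const V g x : {in V, forall v, v = g} -> hull V x -> x = g.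
Proof.
move=> Vg [w [_ w1 ->]]; transitivity ((\sum_(i < size V) w i) *: g).
  by rewrite scaler_suml; apply: eq_bigr => i _; rewrite (Vg V`_i) ?mem_nth.
by rewrite w1 scale1r.
Qed.

Lemma hull_tight V z x : {in V, forall v, 0 <= aff z v} ->
  hull V x /\ aff z x = 0 <-> hull (filter (tight z) V) x.
Proof.
move=> V_ge0; rewrite hull_filter; split.
  move=> [[w [w_ge0 w1 xE]] zx]; exists w; split=> // i iV; apply: contraNeq => wi.
  have supp_ge0 (j : 'I_(size V)) : predT j -> 0 <= w j * aff z V`_j.
    by rewrite mulr_ge0 ?V_ge0 ?mem_nth.
  move: zx; rewrite xE (aff_comb _ _ w1) => /(psumr_eq0P supp_ge0) /(_ (Ordinal iV) isT).
  by move/eqP; rewrite mulf_eq0 (negbTE wi).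
move=> [w [w_ge0 w_p w1 xE]]; split; first by exists w.
rewrite xE (aff_comb _ _ w1) big1 // => i _; apply/eqP.
rewrite mulf_eq0; case: (boolP (tight z V`_i)) => [/eqP -> | /(w_p i (ltn_ord i)) ->].
  by rewrite eqxx orbT.
by rewrite eqxx.
Qed.

Lemma face_trans V (P F G : pset R n) : (forall x, P x <-> hull V x) ->
  face P F -> face F G -> face P G.
Proof.
move=> PV /faceP [zF [P_zF F_zF]] /faceP [zG [F_zG G_zG]]; apply/faceP.
have V_zF : {in V, forall v, 0 <= aff zF v} by move=> v /hull_mem /PV /P_zF.
(* [lam] makes [zG + lam *: zF] nonnegative at the vertices off F. *)
pose lam := 1 + \sum_(v <- V) `|aff zG v / aff zF v|.
pose z := zG + lam *: zF.
have zE x : aff z x = aff zG x + lam * aff zF x by rewrite affDl affZl.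
have V_z v : v \in V -> 0 < aff zF v -> aff zF v <= aff z v.
  move=> vV zFv; set t := aff zG v / aff zF v.
  have zGt : aff zG v = t * aff zF v by rewrite divfK ?gt_eqF.
  have t_lam : `|t| <= lam - 1.
    by rewrite addrAC subrr add0r (big_rem v) //= lerDl sumr_ge0.
  have := ler_norm (- t); rewrite normrN => Nt.
  by rewrite zE zGt -mulrDl ler_pMl //; lra.
have V_z_ge0 : {in V, forall v, 0 <= aff z v}.
  move=> v vV; have := V_zF v vV; rewrite le_eqVlt => /orP [/eqP zFv | zFv].
    by rewrite zE -zFv mulr0 addr0 F_zG // F_zF; split; [apply/PV/hull_mem | ].
  exact: le_trans (ltW zFv) (V_z v vV zFv).
have V_tight : {in filter (tight z) V, forall v, aff zF v = 0}.
  move=> v; rewrite mem_filter => /andP [/eqP zv vV]; apply/eqP.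
  rewrite eq_le V_zF // andbT leNgt; apply/negP => zFv.
  by have := V_z v vV zFv; rewrite zv leNgt zFv.
exists z; split=> [x /PV /hull_aff_ge0 -> // | x].
rewrite G_zG F_zF PV; split=> [[[Vx zFx] zGx] | [Vx zx]].
  by rewrite zE zFx zGx mulr0 addr0.
have zFx : aff zF x = 0.
  by apply: hull_aff_eq0 V_tight _; apply/(hull_tight x V_z_ge0).
by move: zx; rewrite zE zFx mulr0 addr0.
Qed.

End Hull.

Section Dimension.
Variables (R : realFieldType) (n : nat).
Notation pt := 'rV[R]_n.

Lemma dim_is_unique (S : pset R n) d1 d2 : dim_is S d1 -> dim_is S d2 -> d1 = d2.
Proof.
move=> [m1 [-> [[ps1 [<- [S1 ind1]]] max1]]] [m2 [-> [[ps2 [<- [S2 ind2]]] max2]]].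
by have -> : size ps1 = size ps2 by apply/eqP; rewrite eqn_leq max1 ?max2.
Qed.

Lemma dim_is_ext (S T : pset R n) d : (forall x, S x <-> T x) -> dim_is S d -> dim_is T d.
Proof.
move=> ST [m [-> [[ps [s [Sps ind]]] max]]]; exists m; split=> //; split.
  by exists ps; split=> //; split=> // x /Sps /ST.
by move=> qs Tqs; apply: max => x /Tqs /ST.
Qed.

Definition homog_mx m (g : 'I_m -> pt) : 'M[R]_(m, 1 + n) := \matrix_i homog (g i).

Definition homog_seqmx (L : seq pt) := homog_mx (fun i : 'I_(size L) => L`_i).

Lemma mul_homog_mx m (g : 'I_m -> pt) (v : 'rV[R]_m) :
  v *m homog_mx g = row_mx (const_mx (\sum_i v 0 i)) (\sum_i v 0 i *: g i).
Proof. by rewrite mulmx_sum_row -sum_scale_homog; apply: eq_bigr => i _; rewrite rowK. Qed.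

Lemma aff_homog_seqmx (L : seq pt) (y : 'rV[R]_(1 + n)) (i : 'I_(size L)) :
  (y *m (homog_seqmx L)^T) 0 i = aff y L`_i.
Proof. by rewrite !mxE; apply: eq_bigr => j _; rewrite !mxE. Qed.

Lemma aff_indepE (ps : seq pt) : aff_indep ps <-> forall c : nat -> R,
  \sum_(i < size ps) c i = 0 -> \sum_(i < size ps) c i *: ps`_i = 0 ->
  forall i, (i < size ps)%N -> c i = 0.
Proof.
split=> [ind c c0 cps i ips | ind c c0 cps i].
  exact: (ind (fun i : 'I_(size ps) => c i) c0 cps (Ordinal ips)).
pose cn k := \sum_(j < size ps | val j == k) c j.
have cnE (j : 'I_(size ps)) : cn j = c j.
  by rewrite /cn (big_pred1 j) // => k; rewrite /= val_eqE.
rewrite -cnE; apply: ind => //.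
  by rewrite -[RHS]c0; apply: eq_bigr => j _; rewrite cnE.
by rewrite -[RHS]cps; apply: eq_bigr => j _; rewrite cnE.
Qed.

Lemma homog_mx_free_indep m (g : 'I_m -> pt) (c : nat -> R) :
  row_free (homog_mx g) -> \sum_(i < m) c i = 0 -> \sum_(i < m) c i *: g i = 0 ->
  forall i : 'I_m, c i = 0.
Proof.
move=> free c0 cg i.
have : (\row_(j < m) c j) *m homog_mx g == 0.
  rewrite mul_homog_mx; under eq_bigr do rewrite mxE.
  under [X in row_mx _ X]eq_bigr do rewrite mxE.
  by rewrite c0 cg; apply/eqP/rowP => j; rewrite -[j]splitK; case: (split j) => k;
    rewrite ?row_mxEl ?row_mxEr !mxE.
by rewrite mulmx_free_eq0 // => /eqP/rowP/(_ i); rewrite !mxE.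
Qed.

Lemma aff_indep_row_free (ps : seq pt) : aff_indep ps -> row_free (homog_seqmx ps).
Proof.
move=> ind; apply: inj_row_free => v.
rewrite mul_homog_mx -row_mx0 => /eq_row_mx [v0 vps]; apply/rowP => i; rewrite mxE.
apply: (ind (fun i => v 0 i) _ vps).
by have := congr1 (fun c : 'rV_1 => c 0 0) v0; rewrite /= !mxE.
Qed.

Lemma homog_sub_hull (L : seq pt) x : hull L x -> (homog x <= homog_seqmx L)%MS.
Proof.
move=> /hull_homog [w [_ <-]].
have -> : \sum_(i < size L) w i *: homog L`_i = (\row_(i < size L) w i) *m homog_seqmx L.
  by rewrite mulmx_sum_row; apply: eq_bigr => i _; rewrite rowK mxE.
exact: submxMl.
Qed.

Lemma dim_hull (S : pset R n) (L : seq pt) :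
  (forall x, S x <-> hull L x) -> dim_is S ((\rank (homog_seqmx L))%:Z - 1).
Proof.
move=> SL; exists (\rank (homog_seqmx L)); split=> //; split.
  pose f := maxrankfun (homog_seqmx L); pose g i := L`_(f i).
  pose ps := [seq g i | i <- enum 'I_(\rank (homog_seqmx L))].
  have size_ps : size ps = \rank (homog_seqmx L) by rewrite size_map size_enum_ord.
  have psE (i : 'I_(\rank (homog_seqmx L))) : ps`_i = g i.
    by rewrite (nth_map i) ?size_enum_ord ?nth_ord_enum.
  have free_g : row_free (homog_mx g).
    have -> : homog_mx g = rowsub f (homog_seqmx L) by apply/matrixP => i j; rewrite !mxE.
    exact: maxrowsub_free.
  exists ps; split=> //; split.
    by move=> x /mapP [i _ ->]; apply/SL/hull_mem/mem_nth.
  apply/aff_indepE => c; rewrite size_ps => c0 cps i ips.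
  have cg : \sum_(i < \rank (homog_seqmx L)) c i *: g i = 0.
    by rewrite -[RHS]cps; apply: eq_bigr => j _; rewrite psE.
  exact: (homog_mx_free_indep free_g c0 cg (Ordinal ips)).
move=> ps Sps /aff_indep_row_free free_ps.
rewrite -(eqP free_ps); apply: mxrankS; apply/row_subP => i.
by rewrite rowK; apply/homog_sub_hull/SL/Sps/mem_nth.
Qed.

End Dimension.

Section AffineKernel.
Variables (R : realFieldType) (n : nat).
Notation pt := 'rV[R]_n.

Lemma mul_tr_homog_eq0 (L : seq pt) (y : 'rV[R]_(1 + n)) :
  (y *m (homog_seqmx L)^T == 0) = all (fun x => aff y x == 0) L.
Proof.
apply/eqP/allP => [yL x xL | yL].
  have := congr1 (fun M : 'rV_(size L) => M 0 (Ordinal (etrans (index_mem x L) xL))) yL.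
  by rewrite /= aff_homog_seqmx mxE nth_index // => ->.
by apply/rowP => i; rewrite aff_homog_seqmx mxE; apply/eqP/yL/mem_nth.
Qed.

(* The rows of [kermx (homog_seqmx WG)^T] are the affine functions vanishing on WG. *)
Lemma rank_homog_seqmx_sub (W WG : seq pt) : {subset WG <= W} ->
  (\rank (homog_seqmx WG) + \rank (kermx (homog_seqmx WG)^T *m (homog_seqmx W)^T)
   = \rank (homog_seqmx W))%N.
Proof.
move=> sub; have ker_sub : (kermx (homog_seqmx W)^T <= kermx (homog_seqmx WG)^T)%MS.
  apply/rV_subP => y; rewrite !sub_kermx !mul_tr_homog_eq0 => /allP yW.
  by apply/allP => x /sub /yW.
have := mxrank_mul_ker (kermx (homog_seqmx WG)^T) (homog_seqmx W)^T.
rewrite (capmx_idPr ker_sub) !mxrank_ker !mxrank_tr.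
have := rank_leq_col (homog_seqmx W); have := rank_leq_col (homog_seqmx WG); lia.
Qed.

Lemma aff_proportional (W : seq pt) (s p : 'rV[R]_(1 + n)) w0 :
  aff s w0 != 0 -> {in W, forall w, aff p w * aff s w0 = aff p w0 * aff s w} ->
  p *m (homog_seqmx W)^T = (aff p w0 / aff s w0) *: (s *m (homog_seqmx W)^T).
Proof.
move=> sw0 prop; apply/rowP => i; rewrite [RHS]mxE !aff_homog_seqmx.
by apply: (mulIf sw0); rewrite prop ?mem_nth // mulrAC divfK.
Qed.

End AffineKernel.

Section LowerEdge.
Variable R : realFieldType.

Lemma seq_argmin (T : eqType) (s : seq T) (f : T -> R) :
  s != [::] -> exists2 y, y \in s & {in s, forall z, f y <= f z}.
Proof.
elim: s => [//|a s IH] _; have [-> | /IH [y ys ymin]] := eqVneq s [::].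
  by exists a; rewrite ?mem_head // => z; rewrite inE => /eqP ->.
have [fay | fya] := leP (f a) (f y).
  exists a; rewrite ?mem_head // => z; rewrite inE => /predU1P [-> // | zs].
  exact: le_trans fay (ymin z zs).
exists y; rewrite ?inE ?ys ?orbT // => z; rewrite inE => /predU1P [-> | zs].
  exact: ltW.
exact: ymin.
Qed.

Lemma lower_edge_left (T : eqType) (L : seq T) (A S : T -> R) z0 x :
  z0 \in L -> {in L, forall z, A z0 <= A z} -> x \in L -> S x < S z0 ->
  exists b y, [/\ y \in L, S y < S z0, A z0 + b * S z0 = A y + b * S y &
    {in L, forall z, A z0 + b * S z0 <= A z + b * S z}].
Proof.
move=> z0L Amin xL Sx.
pose L' := filter (fun z => S z < S z0) L.
have L'_neq0 : L' != [::].
  by apply/eqP => L'0; have := mem_filter (fun z => S z < S z0) x L; rewrite -/L' L'0 Sx xL.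
pose t z := (A z - A z0) / (S z0 - S z).
have [y] := seq_argmin t L'_neq0; rewrite mem_filter => /andP [Sy yL] ymin.
have Sy_pos : 0 < S z0 - S y by rewrite subr_gt0.
have t_ge0 : 0 <= t y by rewrite divr_ge0 ?subr_ge0 ?Amin // ltW.
exists (t y), y; split=> //; first by rewrite /t; field; rewrite gt_eqF.
move=> z zL; have [Sz | Sz] := ltP (S z) (S z0).
  have Sz_pos : 0 < S z0 - S z by rewrite subr_gt0.
  have := ymin z; rewrite mem_filter Sz zL => /(_ isT).
  by rewrite {2}/t ler_pdivlMr // mulrBr; lra.
have := Amin z zL; have : 0 <= t y * (S z - S z0) by rewrite mulr_ge0 // subr_ge0.
by rewrite mulrBr; lra.
Qed.

Lemma lower_edge (T : eqType) (L : seq T) (A S : T -> R) x1 x2 :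
  x1 \in L -> x2 \in L -> S x1 != S x2 ->
  exists b y1 y2, [/\ y1 \in L, y2 \in L, S y1 != S y2,
    A y1 + b * S y1 = A y2 + b * S y2 &
    {in L, forall z, A y1 + b * S y1 <= A z + b * S z}].
Proof.
move=> x1L x2L Sx12.
have L_neq0 : L != [::] by apply: contraTneq x1L => ->.
have [z0 z0L Amin] := seq_argmin A L_neq0.
have [x xL Sx] : exists2 x, x \in L & S x != S z0.
  have [e | ] := eqVneq (S x1) (S z0); last by exists x1.
  by exists x2; rewrite // -e eq_sym.
have [Sxz | Sxz | Sxz] := ltgtP (S x) (S z0); last by rewrite Sxz eqxx in Sx.
  have [b [y [yL Sy e1 e2]]] := lower_edge_left z0L Amin xL Sxz.
  by exists b, z0, y; rewrite gt_eqF.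
have NSx : - S x < - S z0 by rewrite ltrN2.
have [b [y [yL Sy e1 e2]]] := lower_edge_left (S := fun z => - S z) z0L Amin xL NSx.
exists (- b), z0, y; split=> //.
- by rewrite -eqr_opp gt_eqF.
- by move: e1; rewrite !mulrN !mulNr.
- by move=> z /e2; rewrite !mulrN !mulNr.
Qed.

End LowerEdge.

Lemma cramer2 (R : fieldType) (a1 a2 b1 b2 x y : R) : a1 * b2 != a2 * b1 ->
  x * a1 + y * a2 = 0 -> x * b1 + y * b2 = 0 -> x = 0 /\ y = 0.
Proof.
rewrite -subr_eq0 => det ea eb.
have : x * (a1 * b2 - a2 * b1) = 0.
  by transitivity ((x * a1 + y * a2) * b2 - (x * b1 + y * b2) * a2); [ring | rewrite ea eb; ring].
have : y * (a1 * b2 - a2 * b1) = 0.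
  by transitivity ((x * b1 + y * b2) * a1 - (x * a1 + y * a2) * b1); [ring | rewrite ea eb; ring].
by move=> /eqP; rewrite mulf_eq0 (negbTE det) orbF => /eqP -> /eqP;
  rewrite mulf_eq0 (negbTE det) orbF => /eqP ->.
Qed.

Section Apex.
Variables (R : realFieldType) (n : nat).
Notation pt := 'rV[R]_n.

Lemma aff_indep3 (s p : 'rV[R]_(1 + n)) (g q1 q2 : pt) :
  aff s g = 0 -> aff p g = 0 -> aff p q1 * aff s q2 != aff p q2 * aff s q1 ->
  aff_indep [:: g; q1; q2].
Proof.
move=> sg pg det; apply/aff_indepE => c c0 cq.
have := aff_comb0 s c0 cq; have := aff_comb0 p c0 cq.
rewrite !big_ord_recl !big_ord0 /bump /= sg pg !mulr0 !add0r !addr0 => ep es.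
have [c1 c2] := cramer2 det ep es.
have c00 : c 0%N = 0.
  by move: c0; rewrite !big_ord_recl big_ord0 /bump /= c1 c2 !addr0.
by case=> [|[|[|]]].
Qed.

(* A point of maximal norm is exposed by x |-> <g, g> - <g, x>. *)
Lemma exposed_point (Q : seq pt) : Q != [::] ->
  exists g c, [/\ g \in Q, aff c g = 0 &
    {in Q, forall w, 0 <= aff c w /\ (aff c w = 0 -> w = g)}].
Proof.
move=> Q_neq0; have [g gQ gmax] := seq_argmin (fun x => - dotv x x) Q_neq0.
pose c : 'rV[R]_(1 + n) := row_mx (const_mx (dotv g g)) (- (g : pt)).
have cE x : aff c x = dotv g g - dotv g x by rewrite aff_row_mx mxE dotvNl.
exists g, c; split=> //; first by rewrite cE subrr.
move=> w /gmax; rewrite lerN2 cE => wg.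
have [-> | w_neq_g] := eqVneq w g; first by rewrite subrr.
have := dotv_lt_sqnorm wg w_neq_g; rewrite -subr_gt0 => cw.
by split=> [|cw0]; [exact: ltW | rewrite cw0 ltxx in cw].
Qed.

Lemma apex_face (W : seq pt) (s p : 'rV[R]_(1 + n)) (w1 w2 : pt) :
  {in W, forall w, 0 <= aff s w} -> {in W, forall w, aff s w = 0 -> aff p w = 0} ->
  has (tight s) W -> w1 \in W -> w2 \in W -> 0 < aff s w1 -> 0 < aff s w2 ->
  aff p w1 * aff s w2 != aff p w2 * aff s w1 ->
  exists z g q1 q2, [/\ {in W, forall w, 0 <= aff z w},
    {subset [:: g; q1; q2] <= filter (tight z) W}, aff_indep [:: g; q1; q2] &
    {in W, forall w, aff s w = 0 -> aff z w = 0 -> w = g}].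
Proof.
move=> W_s W_p W_tight w1W w2W s1 s2 det.
have [g [c [gWB cg c_tight]]] : exists g c, [/\ g \in filter (tight s) W, aff c g = 0 &
    {in filter (tight s) W, forall w, 0 <= aff c w /\ (aff c w = 0 -> w = g)}].
  by apply: exposed_point; rewrite -has_filter.
move: gWB; rewrite mem_filter => /andP [/eqP sg gW].
have {}c_tight w : w \in W -> aff s w = 0 -> 0 <= aff c w /\ (aff c w = 0 -> w = g).
  by move=> wW sw; apply: c_tight; rewrite mem_filter /tight sw eqxx.
(* A lower edge of the planar points (S w, A w), w off the hyperplane, yields [z]. *)
pose L := filter (fun w => 0 < aff s w) W.
have L_s w : w \in L -> 0 < aff s w by rewrite mem_filter => /andP [].
pose A w := aff c w / aff s w; pose S w := aff p w / aff s w.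
have w1L : w1 \in L by rewrite mem_filter s1.
have w2L : w2 \in L by rewrite mem_filter s2.
have S_neq w w' : w \in L -> w' \in L ->
    (S w != S w') = (aff p w * aff s w' != aff p w' * aff s w).
  by move=> /L_s sw /L_s sw'; rewrite /S eqr_div ?lt0r_neq0.
have [b [y1 [y2 [y1L y2L Sy e1 e2]]]] : exists b y1 y2, [/\ y1 \in L, y2 \in L,
    S y1 != S y2, A y1 + b * S y1 = A y2 + b * S y2 &
    {in L, forall w, A y1 + b * S y1 <= A w + b * S w}].
  by apply: (lower_edge A (S := S) w1L w2L); rewrite S_neq.
pose h := A y1 + b * S y1.
pose z := (- h) *: s + b *: p + c.
have zE w : aff z w = - h * aff s w + b * aff p w + aff c w by rewrite !affDl !affZl.
have z_off w : w \in L -> aff z w = aff s w * (A w + b * S w - h).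
  by move=> /L_s ?; rewrite zE /A /S; field; rewrite gt_eqF.
have z_hyp w : w \in W -> aff s w = 0 -> aff z w = aff c w.
  by move=> wW sw; rewrite zE sw W_p // !mulr0 !add0r.
have yLW y : y \in L -> y \in W by rewrite mem_filter => /andP [].
exists z, g, y1, y2; split.
- move=> w wW; have := W_s w wW; rewrite le_eqVlt => /orP [/eqP/esym sw | sw].
    by rewrite z_hyp //; case: (c_tight w wW sw).
  have wL : w \in L by rewrite mem_filter sw.
  by rewrite z_off // mulr_ge0 ?(ltW sw) // subr_ge0 e2.
- move=> x; rewrite !inE mem_filter /tight => /or3P [] /eqP ->.
  + by rewrite z_hyp // cg eqxx.
  + by rewrite z_off // /h subrr mulr0 eqxx yLW.
  + by rewrite z_off // /h e1 subrr mulr0 eqxx yLW.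
- by apply: (aff_indep3 sg (W_p g gW sg)); rewrite -S_neq.
- by move=> w wW sw; rewrite z_hyp // => /(proj2 (c_tight w wW sw)).
Qed.

End Apex.

Section CodimensionOne.
Variables (R : realFieldType) (n : nat).
Notation pt := 'rV[R]_n.
Variables (V : seq pt) (P B F : pset R n) (zB zF : 'rV[R]_(1 + n)).
Hypothesis P_hull : forall x, P x <-> hull V x.
Hypotheses (P_zB : forall x, P x -> 0 <= aff zB x) (B_zB : forall x, B x <-> P x /\ aff zB x = 0).
Hypotheses (P_zF : forall x, P x -> 0 <= aff zF x) (F_zF : forall x, F x <-> P x /\ aff zF x = 0).
Hypothesis small_faces : forall G, face P G ->
  (forall x y, G x -> B x -> G y -> B y -> x = y) -> forall d : int, dim_is G d -> d <= 1.

Let W := filter (tight zF) V.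
Let WB := filter (tight zB) W.
Let M := homog_seqmx W.
Let K := kermx (homog_seqmx WB)^T.

Lemma F_hull x : F x <-> hull W x.
Proof.
have V_zF : {in V, forall v, 0 <= aff zF v} by move=> v /hull_mem /P_hull /P_zF.
rewrite -(hull_tight x V_zF) -P_hull; exact: F_zF.
Qed.

Lemma W_zB : {in W, forall w, 0 <= aff zB w}.
Proof. by move=> w /hull_mem /F_hull /F_zF [/P_zB]. Qed.

Lemma FB_hull x : psetI F B x <-> hull WB x.
Proof.
rewrite -(hull_tight _ W_zB) -F_hull; split=> [[Fx /B_zB [] //] | [Fx zBx]].
by split=> //; apply/B_zB; split=> //; case/F_zF: Fx.
Qed.

Lemma face_P_F : face P F.
Proof. by apply/faceP; exists zF. Qed.

Lemma dim_F d : dim_is F d -> d = (\rank M)%:Z - 1.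
Proof. by move=> dF; apply: dim_is_unique dF (dim_hull F_hull). Qed.

Lemma no_apex_face z g q1 q2 : {in W, forall w, 0 <= aff z w} ->
  {subset [:: g; q1; q2] <= filter (tight z) W} -> aff_indep [:: g; q1; q2] ->
  ~ {in W, forall w, aff zB w = 0 -> aff z w = 0 -> w = g}.
Proof.
move=> W_z gqW ind apex; pose H x := F x /\ aff z x = 0.
have face_F_H : face F H by apply/faceP; exists z; split=> // x /F_hull /hull_aff_ge0; apply.
have H_hull x : H x <-> hull (filter (tight z) W) x by rewrite -hull_tight -?F_hull.
have H_B x : H x -> B x -> x = g.
  move=> [Fx zx] Bx.
  have WB_z : {in WB, forall w, 0 <= aff z w} by move=> w; rewrite mem_filter => /andP [_ /W_z].
  have : hull (filter (tight z) WB) x by apply/(hull_tight x WB_z); split=> //; apply/FB_hull.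
  apply: hull_const => w; rewrite !mem_filter => /and3P [/eqP zw /eqP zBw wW].
  by apply: apex zBw zw; rewrite mem_filter.
have := small_faces (face_trans P_hull face_P_F face_F_H).
move=> /(_ (fun x y Hx Bx Hy By => etrans (H_B x Hx Bx) (esym (H_B y Hy By)))).
move=> /(_ _ (dim_hull H_hull)); apply/negP; rewrite -ltNge.
have [m [-> [_ max]]] := dim_hull H_hull.
have := max [:: g; q1; q2] (fun x xgq => proj2 (H_hull x) (hull_mem (gqW x xgq))) ind.
by move=> /= m3; lia.
Qed.

Lemma FB_nonempty d : dim_is F d -> 1 < d -> has (tight zB) W.
Proof.
move=> dF d_gt1; apply/negPn/negP; rewrite has_filter negbK => /eqP WB0.
have FB0 x : ~ (F x /\ B x) by move/FB_hull; rewrite /WB WB0; exact: hull_nil.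
have := small_faces face_P_F (fun x y Fx Bx => False_ind _ (FB0 x (conj Fx Bx))) dF.
by rewrite leNgt d_gt1.
Qed.

Lemma ker_row_proportional d w0 (y : 'rV[R]_(1 + n)) : dim_is F d -> 1 < d ->
  w0 \in W -> 0 < aff zB w0 -> (y <= K)%MS -> (y *m M^T <= zB *m M^T)%MS.
Proof.
move=> dF d_gt1 w0W zBw0 yK.
have WB_y : {in W, forall w, aff zB w = 0 -> aff y w = 0}.
  move: yK; rewrite sub_kermx mul_tr_homog_eq0 => /allP yWB w wW zBw.
  by apply/eqP/yWB; rewrite mem_filter /tight zBw eqxx.
have [prop | [w wW det]] : {in W, forall w, aff y w * aff zB w0 = aff y w0 * aff zB w} \/
    exists2 w, w \in W & aff y w * aff zB w0 != aff y w0 * aff zB w.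
- case: (classic (exists2 w, w \in W & aff y w * aff zB w0 != aff y w0 * aff zB w)).
    by right.
  by move=> none; left=> w wW; apply/eqP/negPn/negP => neq; apply: none; exists w.
- by rewrite (aff_proportional (lt0r_neq0 zBw0) prop) scalemx_sub.
exfalso; have zBw : 0 < aff zB w.
  rewrite lt_def W_zB // andbT; apply: contraNneq det => zBw.
  by rewrite zBw WB_y // mul0r mulr0.
have [z [g [q1 [q2 [W_z gqW ind apex]]]]] :=
  apex_face W_zB WB_y (FB_nonempty dF d_gt1) wW w0W zBw zBw0 det.
exact: no_apex_face W_z gqW ind apex.
Qed.

Lemma dim_FB d : dim_is F d -> 1 < d -> ~ psubset F B -> dim_is (psetI F B) (d - 1).
Proof.
move=> dF d_gt1 FB.
have [w0 w0W zBw0] : exists2 w0, w0 \in W & 0 < aff zB w0.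
  apply: NNPP => none; apply: FB => x /[dup] Fx /F_hull W_x; apply/B_zB.
  split; first by case/F_zF: Fx.
  apply: hull_aff_eq0 W_x => w wW; have := W_zB wW.
  by rewrite le_eqVlt => /orP [/eqP <- // | zBw]; case: none; exists w.
have zBK : (zB <= K)%MS.
  by rewrite sub_kermx mul_tr_homog_eq0; apply/allP => w; rewrite mem_filter => /andP [].
have zBM_neq0 : zB *m M^T != 0.
  rewrite mul_tr_homog_eq0; apply/allPn; exists w0 => //.
  by rewrite gt_eqF.
have rank1 : \rank (K *m M^T) = 1%N.
  apply/eqP; rewrite eqn_leq; apply/andP; split.
    apply: leq_trans (rank_leq_row (zB *m M^T)); apply/mxrankS/row_subP => i.
    by rewrite row_mul (ker_row_proportional dF d_gt1 w0W zBw0) ?row_sub.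
  by have := mxrankS (submxMr M^T zBK); rewrite rank_rV zBM_neq0.
have rankFB := rank_homog_seqmx_sub (mem_subseq (filter_subseq (tight zB) W)).
rewrite -/M -/K rank1 in rankFB.
have -> : d - 1 = (\rank (homog_seqmx WB))%:Z - 1.
  by rewrite (dim_F dF) -rankFB PoszD addrK.
exact: dim_hull FB_hull.
Qed.

End CodimensionOne.

Section TreetopeFaces.
Variables (R : realFieldType) (n : nat) (P B F : pset R n).
Hypotheses (PB : treetope P B) (PF : face P F).

Lemma treetope_face_dim d : dim_is F d -> 1 < d -> ~ psubset F B ->
  dim_is (psetI F B) (d - 1).
Proof.
case: PB => [[V PV] [[/faceP [zB [P_zB B_zB]] _] small]].
have P_hull x : P x <-> hull V x by rewrite -conv_hull.
case/faceP: PF => zF [P_zF F_zF].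
by move=> dF; apply: dim_FB P_hull P_zB B_zB P_zF F_zF small d dF.
Qed.

Lemma treetope_face d : dim_is F d -> 1 < d -> ~ psubset F B ->
  facet F (psetI F B) /\ treetope F (psetI F B).
Proof.
move=> dF d_gt1 FB; case: (PB) => [[V PV] [[/faceP [zB [P_zB B_zB]] _] small]].
have P_hull x : P x <-> hull V x by rewrite -conv_hull.
have [zF [P_zF F_zF]] := proj1 (faceP P F) PF.
have face_FB : face F (psetI F B).
  apply/faceP; exists zB; split=> [x /F_zF [/P_zB] // | x].
  by split=> [[Fx /B_zB [_ zBx]] | [Fx zBx]]; split=> //; apply/B_zB; split=> //; case/F_zF: Fx.
have facet_FB : facet F (psetI F B).
  by split=> //; exists d; split=> //; apply: treetope_face_dim.
split=> //; split; last split=> // G FG FB1.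
  by exists (filter (tight zF) V) => x; rewrite conv_hull; apply: F_hull P_hull P_zF F_zF x.
apply: small (face_trans P_hull PF FG) _ => x y Gx Bx Gy By.
by apply: FB1 => //; split=> //; apply: face_subset FG _ _.
Qed.

End TreetopeFaces.

Unset Implicit Arguments. Set Strict Implicit.

Theorem mainTheorem3 (R : realFieldType) (n : nat) (P B : pset R n) :
  treetope P B ->
  (forall (F : pset R n) (d : int), face P F -> dim_is F d -> 1 < d ->
     psubset F B \/ (facet F (psetI F B) /\ treetope F (psetI F B))) /\
  (forall (F : pset R n) (d e : int), face P F -> dim_is F d -> 1 < d ->
     dim_is (psetI F B) e -> d - 1 <= e).
Proof.
move=> PB; split=> [F d PF dF d_gt1 | F d e PF dF d_gt1 dFB].
  case: (classic (psubset F B)) => FB; first by left.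
  by right; exact: (treetope_face PB PF dF d_gt1 FB).
case: (classic (psubset F B)) => FB; last first.
  by rewrite (dim_is_unique dFB (treetope_face_dim PB PF dF d_gt1 FB)).
have dF' : dim_is (psetI F B) d.
  by apply: (dim_is_ext _ dF) => x; split=> [Fx | [] //]; split=> //; apply: FB.
by rewrite (dim_is_unique dFB dF') gerBl.
Qed.
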